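(* Let $M,N$ be positive integers, $\mathcal{M}=\{1,\dots,M\}$, and let $\omega_N=\{(x_i,\sigma_i)\}_{i=1}^N$ be i.i.d. with respect to the uniform distribution $\mathbb{P}$ over $\mathbb{S}\times\mathcal{M}$. Then, for any $\epsilon\in(0,1)$, with probability no smaller than $1-\mathcal{B}(\epsilon;N)$, $\omega_N$ is an $\epsilon$-covering of $\mathbb{S}\times\mathcal{M}$, where $$\mathcal{B}(\epsilon;N)=\frac{M\left(1-\frac{\delta\left(\frac12\delta^{-1}(\epsilon)\right)}{M}\right)^N}{\delta\left(\frac14\delta^{-1}(\epsilon)\right)}.$$
   Context: $\mathbb{S}$ is the unit sphere in $\mathbb{R}^n$ and $\mu$ the uniform probability measure on $\mathbb{S}$; the uniform distribution on $\mathbb{S}\times\mathcal{M}$ is the product of $\mu$ and the uniform distribution on $\mathcal{M}$. For $x\in\mathbb{S}$, $\theta\in[0,\pi/2]$, $\mathrm{Cap}(x,\theta)=\{v\in\mathbb{S}:|x^\top v|\ge\cos\theta\}$ and $\delta(\theta)=\mu(\mathrm{Cap}(x,\theta))$; $\delta$ is strictly increasing from $[0,\pi/2]$ onto $[0,1]$ with inverse $\delta^{-1}$. Given $\epsilon\in(0,1)$ and $\theta=\delta^{-1}(\epsilon)$, a set $\omega\subset\mathbb{S}\times\mathcal{M}$ is an $\epsilon$-covering of $\mathbb{S}\times\mathcal{M}$ if for every $(x,\sigma)\in\mathbb{S}\times\mathcal{M}$ there exists $z\in\mathbb{S}$ with $(z,\sigma)\in\omega$ and $|z^\top x|\ge\cos\theta$.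 *)

From HB Require Import structures.
From mathcomp Require Import all_boot all_order all_algebra.
From mathcomp Require Import all_classical all_reals all_analysis.
Set Implicit Arguments. Unset Strict Implicit. Unset Printing Implicit Defensive.
Import Order.TTheory GRing.Theory Num.Theory.
Local Open Scope classical_set_scope.
Local Open Scope ring_scope.

Section Defs.
Variables (R : realType) (n : nat).

(* points of R^n are n-tuples, with the product Borel sigma-algebra *)
Definition dotp (x y : n.-tuple R) : R := \sum_(i < n) tnth x i * tnth y i.

Definition sphere : set (n.-tuple R) := [set x | dotp x x = 1].

Definition e0 : n.-tuple R := [tuple ((i : nat) == 0%N)%:R | i < n].

Definition Cap (x : n.-tuple R) (theta : R) : set (n.-tuple R) :=
  [set v | sphere v /\ cos theta <= `| dotp x v |].

(* mu is "the uniform probability measure on S":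
   a probability measure concentrated on S and invariant under all
   orthogonal transformations of R^n *)
Definition orthogonal_map (Q : n.-tuple R -> n.-tuple R) : Prop :=
  forall x y, dotp (Q x) (Q y) = dotp x y.

Definition uniform_on_sphere (mu : probability (n.-tuple R) R) : Prop :=
  mu sphere = 1%E /\
  forall Q, orthogonal_map Q ->
    forall A, measurable A -> mu (Q @^-1` A) = mu A.

(* delta(theta) = mu(Cap(x, theta)) (independent of x by invariance) *)
Definition delta (mu : probability (n.-tuple R) R) (theta : R) : R :=
  fine (mu (Cap e0 theta)).

(* omega = {(z_i, sigma_i)}_{i<N} is an eps-covering of S x M, where
   theta = delta^{-1}(eps) *)
Definition covering (M N : nat) (theta : R)
    (omega : 'I_N -> n.-tuple R * 'I_M) : Prop :=
  forall (x : n.-tuple R) (s : 'I_M), sphere x ->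
    exists i : 'I_N, (omega i).2 = s /\ sphere (omega i).1 /\
      cos theta <= `| dotp (omega i).1 x |.

Definition Bbound (mu : probability (n.-tuple R) R) (M N : nat) (theta : R) : R :=
  M%:R * (1 - delta mu (theta / 2) / M%:R) ^+ N / delta mu (theta / 4).

End Defs.

(* Let f_1, ..., f_K be a maximal family of points of the sphere whose caps of
   angle theta/4 are pairwise disjoint: disjointness gives K <= 1/delta(theta/4)
   and maximality makes the caps of angle theta/2 around them cover the sphere.
   If for every j and every label s some sample with label s falls into the cap
   of angle theta/2 around f_j, the triangle inequality for angles between lines
   shows that the samples form an eps-covering. By independence each of these
   K M events fails with probability (1 - delta(theta/2)/M)^N, and the union
   bound gives the claim. *)

From HB Require Import structures.
From mathcomp Require Import all_boot all_order all_algebra.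
From mathcomp Require Import all_classical all_reals all_analysis.
From mathcomp Require Import ring lra.
Import Order.TTheory GRing.Theory Num.Theory.
Local Open Scope classical_set_scope.
Local Open Scope ring_scope.
Set Implicit Arguments. Unset Strict Implicit. Unset Printing Implicit Defensive.

Section Dotp.
Variables (R : realType) (n : nat).
Implicit Types (a b c x y z v w : n.-tuple R).

Definition vsub a b : n.-tuple R := [tuple tnth a i - tnth b i | i < n].
Definition vscale (t : R) a : n.-tuple R := [tuple t * tnth a i | i < n].

Lemma dotpC a b : dotp a b = dotp b a.
Proof. by apply: eq_bigr => i _; rewrite mulrC. Qed.

Lemma dotpBl a b c : dotp (vsub a b) c = dotp a c - dotp b c.
Proof. by rewrite /dotp -sumrB; apply: eq_bigr => i _; rewrite tnth_mktuple mulrBl. Qed.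

Lemma dotpBr a b c : dotp c (vsub a b) = dotp c a - dotp c b.
Proof. by rewrite dotpC dotpBl !(dotpC c). Qed.

Lemma dotpZl t a c : dotp (vscale t a) c = t * dotp a c.
Proof. by rewrite /dotp mulr_sumr; apply: eq_bigr => i _; rewrite tnth_mktuple mulrA. Qed.

Lemma dotpZr t a c : dotp c (vscale t a) = t * dotp c a.
Proof. by rewrite dotpC dotpZl dotpC. Qed.

Definition dotpE := (dotpBl, dotpBr, dotpZl, dotpZr).

Lemma dotpp_ge0 a : 0 <= dotp a a.
Proof. by apply: sumr_ge0 => i _; rewrite -expr2 sqr_ge0. Qed.

Lemma dotpp_eq0 a b : dotp a a = 0 -> dotp a b = 0.
Proof.
move=> /eqP; rewrite psumr_eq0 => [/allP a0|i _]; last by rewrite -expr2 sqr_ge0.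
rewrite /dotp big1 // => i _.
by have := a0 i (mem_index_enum _); rewrite -expr2 sqrf_eq0 => /eqP ->; rewrite mul0r.
Qed.

Lemma sqr_dotp_le a b : dotp a b ^+ 2 <= dotp a a * dotp b b.
Proof.
set A := dotp a a; set B := dotp b b; set C := dotp a b.
have [B0|B0] := eqVneq B 0; first by rewrite B0 /C dotpC dotpp_eq0 // expr0n mulr0.
have Bgt0 : 0 < B by rewrite lt_def B0 dotpp_ge0.
have := dotpp_ge0 (vsub (vscale B a) (vscale C b)).
have -> : dotp (vsub (vscale B a) (vscale C b)) (vsub (vscale B a) (vscale C b))
    = B * (A * B - C ^+ 2) by rewrite !dotpE (dotpC b a) -/A -/B -/C; ring.
by rewrite pmulr_rge0 // subr_ge0.
Qed.

Lemma sqr_normr_dotp_le a b : `|dotp a b| ^+ 2 <= dotp a a * dotp b b.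
Proof. by rewrite real_normK ?num_real // sqr_dotp_le. Qed.

(* Project [a] and [c] onto the orthogonal complement of [b] and apply Cauchy-Schwarz. *)
Lemma sqr_dotp_sub_le a b c : sphere a -> sphere b -> sphere c ->
  (dotp a c - dotp a b * dotp b c) ^+ 2 <= (1 - dotp a b ^+ 2) * (1 - dotp b c ^+ 2).
Proof.
rewrite /sphere /= => a1 b1 c1.
pose a' := vsub a (vscale (dotp a b) b); pose c' := vsub c (vscale (dotp b c) b).
have -> : dotp a c - dotp a b * dotp b c = dotp a' c'.
  by rewrite !dotpE b1; ring.
have -> : 1 - dotp a b ^+ 2 = dotp a' a' by rewrite !dotpE a1 b1 (dotpC b a); ring.
have -> : 1 - dotp b c ^+ 2 = dotp c' c' by rewrite !dotpE c1 b1 (dotpC c b); ring.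
exact: sqr_dotp_le.
Qed.

Lemma line_angle_triangle a b c (al be : R) :
  sphere a -> sphere b -> sphere c ->
  0 <= al -> 0 <= be -> al + be <= pi / 2 ->
  cos al <= `|dotp a b| -> cos be <= `|dotp b c| ->
  cos (al + be) <= `|dotp a c|.
Proof.
move=> a1 b1 c1 al0 be0 albe hab hbc.
have pi2 : 0 < pi / 2 :> R by rewrite divr_gt0 // pi_gt0.
have cal : 0 <= cos al by apply: cos_ge0_pihalf; lra.
have cbe : 0 <= cos be by apply: cos_ge0_pihalf; lra.
have sal : 0 <= sin al by apply: sin_ge0_pi; lra.
have sbe : 0 <= sin be by apply: sin_ge0_pi; lra.
have sca := cos2Dsin2 al; have scb := cos2Dsin2 be.
set p := dotp a b in hab *; set q := dotp b c in hbc *.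
have p2 : cos al ^+ 2 <= p ^+ 2 by rewrite -[p ^+ 2]real_normK ?num_real // ler_sqr ?nnegrE.
have q2 : cos be ^+ 2 <= q ^+ 2 by rewrite -[q ^+ 2]real_normK ?num_real // ler_sqr ?nnegrE.
have p1 : p ^+ 2 <= 1 by have := sqr_dotp_le a b; rewrite a1 b1 mulr1.
have q1 : q ^+ 2 <= 1 by have := sqr_dotp_le b c; rewrite b1 c1 mulr1.
set e := dotp a c - p * q.
have e_le : `|e| <= sin al * sin be.
  rewrite -ler_sqr ?nnegrE ?mulr_ge0 // real_normK ?num_real //.
  apply: le_trans (sqr_dotp_sub_le a1 b1 c1) _.
  by rewrite -/p -/q exprMn; apply: ler_pM; lra.
have pq : cos al * cos be <= `|p * q| by rewrite normrM; apply: ler_pM.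
have : `|p * q| - `|e| <= `|dotp a c|.
  have -> : p * q = dotp a c - e by rewrite /e; ring.
  by rewrite lerBlDr ler_normB.
rewrite cosD; lra.
Qed.

End Dotp.

Section Sphere.
Variables (R : realType) (n : nat).
Implicit Types (u v x y q : n.-tuple R).

Lemma e0_sphere : (0 < n)%N -> sphere (e0 R n).
Proof.
case: n => [//|n'] _; rewrite /sphere /= /dotp big_ord_recl !tnth_mktuple mulr1.
by rewrite big1 ?addr0 // => i _; rewrite !tnth_mktuple mulr0.
Qed.

Definition householder u v : n.-tuple R := vsub v (vscale (2 * dotp u v / dotp u u) u).

Lemma householder_orthogonal u : orthogonal_map (householder u).
Proof.
move=> x y; rewrite /householder !dotpE (dotpC x u).
have [->|u0] := eqVneq (dotp u u) 0; first by rewrite invr0 !mulr0 !mul0r !subr0.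
by field.
Qed.

(* The reflection through the hyperplane orthogonal to [y - e0] swaps [y] and [e0]. *)
Lemma dotp_e0_householder y v : (0 < n)%N -> sphere y ->
  dotp (e0 R n) (householder (vsub y (e0 R n)) v) = dotp y v.
Proof.
move=> n0 y1; have e1 := e0_sphere n0; rewrite /sphere /= in y1 e1.
rewrite /householder; set u := vsub y (e0 R n).
have uu : dotp u u = 2 - 2 * dotp (e0 R n) y.
  by rewrite /u !dotpE e1 y1 (dotpC y); ring.
have ue : dotp (e0 R n) u = dotp (e0 R n) y - 1 by rewrite /u dotpBr e1.
have uv : dotp u v = dotp y v - dotp (e0 R n) v by rewrite /u dotpBl.
rewrite dotpBr dotpZr ue uv.
have [u0|u0] := eqVneq (dotp u u) 0.
  by move: (dotpp_eq0 v u0); rewrite uv u0 invr0 mulr0 mul0r subr0 => /eqP; rewrite subr_eq0 => /eqP.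
by rewrite uu in u0 *; field.
Qed.

Definition normalize q : n.-tuple R := vscale (Num.sqrt (dotp q q))^-1 q.

Lemma normalize_sphere q : 0 < dotp q q -> sphere (normalize q).
Proof.
move=> q0; rewrite /sphere /= /normalize dotpZl dotpZr mulrA -expr2 exprVn.
by rewrite sqr_sqrtr ?ltW // mulVf // gt_eqF.
Qed.

Lemma dotp_normalizel q x : dotp (normalize q) x = dotp q x / Num.sqrt (dotp q q).
Proof. by rewrite /normalize dotpZl mulrC. Qed.

Lemma measurable_dotp x : measurable_fun setT (dotp x).
Proof.
apply: measurable_sum => i; apply: measurable_realfun.measurable_funM.
  exact: measurable_cst.
exact: measurable_tnth.
Qed.

Lemma measurable_sphere : measurable (@sphere R n).
Proof.
have mdotpp : measurable_fun setT (fun v : n.-tuple R => dotp v v).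
  by apply: measurable_sum => i; apply: measurable_realfun.measurable_funM; exact: measurable_tnth.
by have := mdotpp measurableT _ (measurable_set1 1); rewrite setTI.
Qed.

Lemma measurable_Cap x th : measurable (Cap x th).
Proof.
have mnorm : measurable_fun setT (fun v => `|dotp x v|).
  exact: measurableT_comp (@measurable_realfun.normr_measurable R setT) (measurable_dotp x).
have -> : Cap x th = @sphere R n `&` ((fun v => `|dotp x v|) @^-1` `[cos th, +oo[).
  by apply/seteqP; split => v /=; rewrite in_itv /= andbT.
apply: measurableI; first exact: measurable_sphere.
by have := mnorm measurableT _ (measurable_itv `[cos th, +oo[); rewrite setTI.
Qed.

End Sphere.

Section CapMeasure.
Variables (R : realType) (n : nat) (mu : probability (n.-tuple R) R).

Lemma Cap_measure y th : (0 < n)%N -> uniform_on_sphere mu -> sphere y ->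
  mu (Cap y th) = (delta mu th)%:E.
Proof.
move=> n0 [_ inv] y1; have mC := measurable_Cap (e0 R n) th.
rewrite /delta fineK ?fin_num_measure // -(inv _ (householder_orthogonal (vsub y (e0 R n))) _ mC).
congr (mu _); apply/seteqP; split => v;
  by rewrite /Cap /sphere /= householder_orthogonal dotp_e0_householder.
Qed.

Lemma delta_ge0 th : 0 <= delta mu th.
Proof. exact: fine_ge0. Qed.

Lemma delta_le1 th : delta mu th <= 1.
Proof.
have mC := measurable_Cap (e0 R n) th.
by rewrite /delta -lee_fin fineK ?fin_num_measure ?probability_le1.
Qed.

End CapMeasure.

Section SphereSeq.
Variables (R : realType) (n : nat).
Hypothesis n0 : (0 < n)%N.
Implicit Types (v x : n.-tuple R).

Definition rat_tuple (q : {ffun 'I_n -> rat}) : n.-tuple R := [tuple ratr (q i) | i < n].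

Definition sphere_seq (k : nat) : n.-tuple R :=
  if unpickle k is Some q then
    if 0 < dotp (rat_tuple q) (rat_tuple q) then normalize (rat_tuple q) else e0 R n
  else e0 R n.

Lemma sphere_seq_sphere k : sphere (sphere_seq k).
Proof.
rewrite /sphere_seq; case: unpickle => [q|]; last exact: e0_sphere.
by case: ifP => [/normalize_sphere //|_]; exact: e0_sphere.
Qed.

Lemma rat_tuple_approx x r : 0 < r ->
  exists q, dotp (vsub (rat_tuple q) x) (vsub (rat_tuple q) x) <= r ^+ 2.
Proof.
move=> r0; have nR : 1 <= (n%:R : R) by rewrite ler1n.
set h := r / n%:R; have h0 : 0 < h by rewrite divr_gt0 // ltr0n.
have /choice[qf qfP] : forall i : 'I_n, exists q : rat, ratr q \in `]tnth x i - h, tnth x i + h[.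
  by move=> i; apply: rat_in_itvoo; lra.
exists [ffun i => qf i]; set w := vsub _ x.
have w_lt i : `|tnth w i| < h.
  move: (qfP i); rewrite in_itv /= /w !tnth_mktuple ffunE => /andP[lo hi].
  by rewrite ltr_norml; apply/andP; split; lra.
apply: (@le_trans _ _ (\sum_(i < n) h ^+ 2)).
  apply: ler_sum => i _; rewrite -expr2 -real_normK ?num_real // ler_sqr ?nnegrE ?(ltW h0) //.
  exact: ltW.
rewrite sumr_const card_ord -mulr_natl.
have -> : n%:R * h ^+ 2 = r ^+ 2 / n%:R by rewrite /h; field; rewrite pnatr_eq0 -lt0n.
by rewrite ler_pdivrMr ?ltr0n //; have := exprn_gt0 2 r0; nra.
Qed.

Lemma dotp_normalize_ge x v r : sphere x -> 0 < r <= 1 / 2 ->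
  dotp (vsub v x) (vsub v x) <= r ^+ 2 ->
  0 < dotp v v /\ 1 - 2 * r <= dotp (normalize v) x.
Proof.
rewrite /sphere /= => x1 /andP[r0 r1] wr; set w := vsub v x in wr.
have xw : `|dotp x w| <= r.
  rewrite -ler_sqr ?nnegrE ?(ltW r0) //.
  by apply: le_trans (sqr_normr_dotp_le x w) _; rewrite x1 mul1r.
have /andP[xw_lo xw_hi] : -r <= dotp x w <= r by rewrite -ler_norml.
have xv : 1 - r <= dotp x v by rewrite /w dotpBr x1 in xw_lo; lra.
have vv : dotp v v <= (1 + r) ^+ 2.
  by rewrite /w !dotpE x1 (dotpC v x) in wr xw_hi *; lra.
have vv_gt0 : 0 < dotp v v by have := sqr_dotp_le x v; rewrite x1 mul1r; nra.
split=> //; rewrite dotp_normalizel dotpC.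
have s0 : 0 < Num.sqrt (dotp v v) by rewrite sqrtr_gt0.
have s1 : Num.sqrt (dotp v v) <= 1 + r.
  by rewrite -ler_sqr ?nnegrE ?sqrtr_ge0 ?sqr_sqrtr ?(ltW vv_gt0) //; lra.
have : 0 <= (1 - 2 * r) * (1 + r - Num.sqrt (dotp v v)) by apply: mulr_ge0; lra.
rewrite ler_pdivlMr //; nra.
Qed.

Lemma sphere_seq_dense x eta : sphere x -> 0 < eta ->
  exists k, 1 - eta <= dotp (sphere_seq k) x.
Proof.
move=> x1 eta0; set r := Num.min (eta / 2) (1 / 2).
have r0 : 0 < r by rewrite lt_min !divr_gt0.
have r_le : r <= eta / 2 by rewrite ge_min lexx.
have r_half : 0 < r <= 1 / 2 by rewrite r0 ge_min lexx orbT.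
have [q qx] := rat_tuple_approx x r0.
have [v0 vx] := dotp_normalize_ge x1 r_half qx.
exists (pickle q); rewrite /sphere_seq pickleK v0; lra.
Qed.

End SphereSeq.

Section Nets.
Variables (R : realType) (n : nat) (mu : probability (n.-tuple R) R).
Hypothesis n0 : (0 < n)%N.
Hypothesis mu_unif : uniform_on_sphere mu.

Lemma cos_lt1 (al : R) : 0 < al -> al <= pi / 2 -> cos al < 1.
Proof.
move=> al0 al1; have pi0 := pi_gt0 R; rewrite -(cos0 R) ltr_cos // in_itv /=; lra.
Qed.

(* Otherwise countably many null caps, centred on the dense sequence, would cover the sphere. *)
Lemma delta_gt0 al : 0 < al -> al <= pi / 2 -> 0 < delta mu al.
Proof.
move=> al0 al1; rewrite lt_def delta_ge0 andbT; apply/eqP => d0.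
have sub : @sphere R n `<=` \bigcup_k Cap (sphere_seq R n k) al.
  move=> x x1; have c1 : 0 < 1 - cos al by have := cos_lt1 al0 al1; lra.
  have [k xk] := sphere_seq_dense n0 x1 c1.
  by exists k => //; split=> //; apply: le_trans (ler_norm _); lra.
have capk k : mu (Cap (sphere_seq R n k) al) = 0.
  by rewrite (Cap_measure _ n0 mu_unif (sphere_seq_sphere _ n0 k)) d0.
have := measure_sigma_subadditive mu (fun k => measurable_Cap _ al) (@measurable_sphere R n) sub.
rewrite eseries0 => [|k _ _]; last exact: capk.
case: mu_unif => mu1 _ le0.
have : (1 <= mu (@sphere R n))%E by rewrite mu1.
by move/le_trans/(_ le0); rewrite leNgt lte01.
Qed.

Definition separated al K (f : 'I_K -> n.-tuple R) :=
  (forall i, sphere (f i)) /\ (forall i j, i != j -> `|dotp (f i) (f j)| < cos (al + al)).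

Lemma separated_card_le al K (f : 'I_K -> n.-tuple R) :
  0 <= al -> al + al <= pi / 2 -> separated al f -> K%:R * delta mu al <= 1.
Proof.
move=> al0 al2 [f1 fsep].
have Cap_disj : trivIset setT (fun i => Cap (f i) al).
  move=> i j _ _ [v [[v1 fiv] [_ fjv]]]; apply/eqP/negPn/negP => /fsep.
  rewrite ltNge => /negP; apply.
  by apply: (line_angle_triangle (f1 i) v1 (f1 j)) => //; rewrite dotpC.
have := measure_bigsetU_ord mu predT (fun i => measurable_Cap (f i) al) Cap_disj.
rewrite (eq_bigr (fun=> (delta mu al)%:E)) => [|i _]; last exact: Cap_measure.
rewrite sumEFin sumr_const card_ord => mu_U.
rewrite mulr_natl -lee_fin -mu_U probability_le1 //.
by apply: bigsetU_measurable => i _; exact: measurable_Cap.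
Qed.

Lemma separated_extend al K (f : 'I_K -> n.-tuple R) x :
  separated al f -> sphere x -> (forall i, `|dotp (f i) x| < cos (al + al)) ->
  separated al (fun i : 'I_K.+1 => if unlift ord_max i is Some j then f j else x).
Proof.
move=> [f1 fsep] x1 fx; split=> [i|i j]; first by case: unliftP.
case: unliftP => [i' ->|->]; case: unliftP => [j' ->|->] //.
- by rewrite (inj_eq (@lift_inj _ ord_max)); exact: fsep.
- by rewrite dotpC.
- by rewrite eqxx.
Qed.

Lemma exists_maximal_separated al : 0 <= al -> al + al <= pi / 2 -> 0 < delta mu al ->
  exists K (f : 'I_K -> n.-tuple R), separated al f /\
    forall x, sphere x -> exists i, cos (al + al) <= `|dotp (f i) x|.
Proof.
move=> al0 al2 d0.
pose P k := `[< exists f : 'I_k -> n.-tuple R, separated al f >].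
have P0 : exists k, P k by exists 0%N; apply/asboolP; exists (fun=> e0 R n); split; case.
have P_le k : P k -> (k <= Num.truncn (delta mu al)^-1)%N.
  move=> /asboolP[f /(separated_card_le al0 al2) Kd].
  rewrite truncn_ge_nat; last by rewrite invr_ge0 ltW.
  by rewrite -(ler_pM2r d0) mulVf ?gt_eqF.
have [K /asboolP[f fsep] Kmax] := ex_maxnP P0 P_le.
exists K, f; split=> // x x1; apply: contrapT => /forallNP fx.
have /Kmax : P K.+1.
  apply/asboolP; eexists; apply: separated_extend fsep x1 _ => i.
  by rewrite ltNge; apply/negP; exact: fx.
by rewrite ltnn.
Qed.

End Nets.

Lemma fsbig_finType (T : Type) (idx : T) (op : Monoid.com_law idx) (I : finType) (F : I -> T) :
  \big[op/idx]_(i \in [set: I]) F i = \big[op/idx]_(i : I) F i.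
Proof.
rewrite fsbig_finite; last exact: (@finite_finset I).
apply: (perm_big (index_enum I)).
apply: uniq_perm => [||i]; [exact: finmap.fset_uniq | exact: index_enum_uniq |].
by rewrite in_fset_set ?in_setT ?mem_index_enum //; exact: (@finite_finset I).
Qed.

Section FiniteMeasurable.
Variables (d : measure_display) (T : measurableType d) (I : finType) (F : I -> set T).
Hypothesis mF : forall i, measurable (F i).

Lemma measurable_forall : measurable [set w | forall i, F i w].
Proof.
have -> : [set w | forall i, F i w] = \bigcap_(i in [set: I]) F i.
  by apply/seteqP; split=> w /= wF i //; exact: wF.
by apply: fin_bigcap_measurable => [|i _]; [exact: (@finite_finset I) | exact: mF].
Qed.

Lemma measurable_exists : measurable [set w | exists i, F i w].
Proof.
have -> : [set w | exists i, F i w] = \bigcup_(i in [set: I]) F i.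
  by apply/seteqP; split=> w /= [i]; exists i.
by apply: fin_bigcup_measurable => [|i _]; [exact: (@finite_finset I) | exact: mF].
Qed.

End FiniteMeasurable.

Lemma prob_forall_not_ge (R : realType) (d : measure_display) (T : measurableType d)
    (P : probability T R) (I : finType) (F : I -> set T) :
  (forall i, measurable (F i)) ->
  ((1 - \sum_i fine (P (F i)))%:E <= P [set w | forall i, ~ F i w])%E.
Proof.
move=> mF; have mU : measurable (\bigcup_(i in [set: I]) F i).
  by apply: fin_bigcup_measurable => [|i _]; [exact: (@finite_finset I) | exact: mF].
have -> : [set w | forall i, ~ F i w] = ~` \bigcup_(i in [set: I]) F i.
  by apply/seteqP; split=> w /=; [move=> wF [i _ /wF] | move=> nU i Fi; apply: nU; exists i].
rewrite probability_setC // EFinB leeB // -sumEFin.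
rewrite (eq_bigr (fun i => P (F i))) => [|i _]; last by rewrite fineK ?fin_num_measure.
rewrite -fsbig_finType.
by apply: content_sub_fsum => //; exact: (@finite_finset I).
Qed.

Section Covering.
Variables (R : realType) (n M N : nat).
Hypothesis n0 : (0 < n)%N.
Implicit Types (omega : 'I_N -> n.-tuple R * 'I_M) (theta : R).

Lemma sqr_dotp_subr_le (z d x : n.-tuple R) : sphere z -> sphere d -> sphere x ->
  (dotp z d - dotp z x) ^+ 2 <= 2 - 2 * dotp d x.
Proof.
rewrite /sphere /= => z1 d1 x1; rewrite -dotpBr.
apply: le_trans (sqr_dotp_le _ _) _.
by rewrite z1 mul1r !dotpE d1 x1 (dotpC x d); lra.
Qed.

Lemma covering_of_net theta K (f : 'I_K -> n.-tuple R) omega :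
  0 <= theta <= pi / 2 -> (forall j, sphere (f j)) ->
  (forall x, sphere x -> exists j, cos (theta / 2) <= `|dotp (f j) x|) ->
  (forall j s, exists i, (omega i).2 = s /\ Cap (f j) (theta / 2) (omega i).1) ->
  covering theta omega.
Proof.
move=> /andP[th0 th1] f1 f_net hit x s x1.
have [j fx] := f_net x x1; have [i [si [z1 fz]]] := hit j s.
exists i; split=> //; split=> //; rewrite {1}(splitr theta).
by apply: (line_angle_triangle z1 (f1 j) x1) => //; [lra | lra | lra | rewrite dotpC].
Qed.

(* If [x] is not covered, it is not covered with a positive margin, and a
   point of the dense sequence close enough to [x] is not covered either. *)
Lemma coveringP theta omega : covering theta omega <->
  forall k s, exists i, (omega i).2 = s /\ Cap (sphere_seq R n k) theta (omega i).1.
Proof.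
split=> [cov k s | cov_seq x s x1].
  have [i [si [z1 zk]]] := cov _ s (sphere_seq_sphere _ n0 k).
  by exists i; split=> //; split=> //; rewrite dotpC.
apply: contrapT => /forallNP uncov.
pose margin i := if ((omega i).2 == s) && `[< sphere (omega i).1 >]
  then cos theta - `|dotp (omega i).1 x| else 1.
have margin_gt0 i : 0 < margin i.
  rewrite /margin; case: ifP => // /andP[/eqP si /asboolP z1].
  by rewrite subr_gt0 ltNge; apply/negP => zx; exact: uncov i (conj si (conj z1 zx)).
pose et := \big[Order.min/1]_i margin i.
have et0 : 0 < et by apply: (big_ind (fun t => 0 < t)) => // a b a0 b0; rewrite lt_min a0 b0.
have [k xk] := sphere_seq_dense n0 x1 (ltac:(by rewrite divr_gt0 ?exprn_gt0) : 0 < et ^+ 2 / 8).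
have [i [si [z1 zk]]] := cov_seq k s.
have : et <= margin i by exact: bigmin_le.
rewrite /margin si eqxx /=; have /asboolP -> := z1.
have := sqr_dotp_subr_le z1 (sphere_seq_sphere _ n0 k) x1.
have := ler_normB (dotp (omega i).1 (sphere_seq R n k)) (dotp (omega i).1 x).
rewrite dotpC in zk; set u := dotp _ (sphere_seq R n k) in zk *; set v := dotp _ x.
move=> uv uv2 et_le.
have : `|u - v| <= et / 2.
  by rewrite -ler_sqr ?nnegrE ?divr_ge0 ?(ltW et0) // real_normK ?num_real //; lra.
have := ler_normD (u - v) v; rewrite subrK; lra.
Qed.

End Covering.

Section Sampling.
Variables (R : realType) (n M N : nat) (mu : probability (n.-tuple R) R)
  (dO : measure_display) (Omega : measurableType dO) (P : probability Omega R)
  (X : 'I_N -> Omega -> n.-tuple R) (Sg : 'I_N -> Omega -> 'I_M).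
Hypothesis n0 : (0 < n)%N.
Hypothesis mu_unif : uniform_on_sphere mu.
Hypothesis mX : forall i, measurable_fun setT (X i).
Hypothesis mSg : forall i k, measurable (Sg i @^-1` [set k]).
Hypothesis iid : forall (A : 'I_N -> set (n.-tuple R)) (B : 'I_N -> {set 'I_M}),
  (forall i, measurable (A i)) ->
  P [set w | forall i, A i (X i w) /\ Sg i w \in B i] =
  (\prod_(i < N) (fine (mu (A i)) * (#|B i|%:R / M%:R)))%:E.

Lemma measurable_sample_preimage i A : measurable A -> measurable (X i @^-1` A).
Proof. by move=> mA; have := mX i measurableT mA; rewrite setTI. Qed.

Lemma measurable_label_in i (B : {set 'I_M}) : measurable [set w | Sg i w \in B].
Proof.
have -> : [set w | Sg i w \in B] =
    [set w | exists k, (if k \in B then Sg i @^-1` [set k] else set0) w].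
  apply/seteqP; split=> w /=; first by move=> wB; exists (Sg i w); rewrite wB.
  by case=> k; case: ifP => // kB /= ->.
by apply: measurable_exists => k; case: ifP.
Qed.

Lemma measurable_sample i A (B : {set 'I_M}) : measurable A ->
  measurable [set w | A (X i w) /\ Sg i w \in B].
Proof.
by move=> mA; exact: measurableI (measurable_sample_preimage i mA) (measurable_label_in i B).
Qed.

(* Splitting every coordinate along disjoint rectangles writes the event as a
   disjoint union of product rectangles indexed by [{ffun 'I_N -> J}]. *)
Lemma prob_forall_disjoint_rectangles (J : finType) (A : J -> set (n.-tuple R))
    (B : J -> {set 'I_M}) :
  (forall j, measurable (A j)) ->
  (forall j j' x s, A j x -> s \in B j -> A j' x -> s \in B j' -> j = j') ->
  P [set w | forall i, exists j, A j (X i w) /\ Sg i w \in B j] =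
  (\prod_(i < N) \sum_j fine (mu (A j)) * (#|B j|%:R / M%:R))%:E.
Proof.
move=> mA AB_disj.
pose rect (f : {ffun 'I_N -> J}) :=
  [set w | forall i, A (f i) (X i w) /\ Sg i w \in B (f i)].
have mrect f : measurable (rect f) by apply: measurable_forall => i; exact: measurable_sample.
have -> : [set w | forall i, exists j, A j (X i w) /\ Sg i w \in B j] =
    \bigcup_(f in [set: {ffun 'I_N -> J}]) rect f.
  apply/seteqP; split=> w /=; last by case=> f _ wf i; exists (f i).
  by move=> wJ; have [g wg] := choice wJ; exists [ffun i => g i] => // i; rewrite ffunE.
rewrite measure_fin_bigcup //; last 2 first.
- exact: (@finite_finset {ffun 'I_N -> J}).
- move=> f f' _ _ [w [wf wf']]; apply/ffunP => i.
  by have [[Af Bf] [Af' Bf']] := (wf i, wf' i); exact: AB_disj Af Bf Af' Bf'.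
pose g (f : {ffun 'I_N -> J}) := \prod_(i < N) (fine (mu (A (f i))) * (#|B (f i)|%:R / M%:R)).
rewrite fsbig_finType (eq_bigr (fun f => (g f)%:E)) => [|f _]; last first.
  exact: (@iid (fun i => A (f i)) (fun i => B (f i)) (fun i => mA (f i))).
by rewrite sumEFin bigA_distr_bigA.
Qed.

Definition missed (C : set (n.-tuple R)) (s : 'I_M) :=
  [set w | forall i, ~ (C (X i w) /\ Sg i w = s)].

Lemma measurable_missed C s : measurable C -> measurable (missed C s).
Proof.
move=> mC; apply: measurable_forall => i; apply: measurableC.
exact: measurableI (measurable_sample_preimage i mC) (mSg i s).
Qed.

Lemma prob_missed C s : measurable C ->
  P (missed C s) = ((1 - fine (mu C) / M%:R) ^+ N)%:E.
Proof.
move=> mC; pose A (b : bool) := if b then ~` C else C.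
pose B (b : bool) : {set 'I_M} := if b then [set: 'I_M]%SET else [set~ s]%SET.
have -> : missed C s = [set w | forall i, exists b, A b (X i w) /\ Sg i w \in B b].
  apply/seteqP; split=> w wC i.
  - have [Ci|nCi] := pselect (C (X i w)); last by exists true; rewrite inE.
    by exists false; split=> //; rewrite !inE; apply/eqP => Si; exact: wC i (conj Ci Si).
  - by case: (wC i) => -[] [/= Ai]; rewrite !inE => /eqP Si [].
rewrite prob_forall_disjoint_rectangles; last 2 first.
- by case=> //; exact: measurableC.
- by move=> [] [] x k //=.
have M0 : (0 < M)%N := leq_ltn_trans (leq0n s) (ltn_ord s).
have muC : mu C = (fine (mu C))%:E by rewrite fineK ?fin_num_measure.
rewrite prodr_const card_ord big_bool /= cardsT cardsC1 card_ord probability_setC // muC /=.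
rewrite -subn1 natrB //; congr ((_ ^+ _)%:E).
by field; rewrite pnatr_eq0 -lt0n.
Qed.

Lemma measurable_covering theta :
  measurable [set w | covering theta (fun i => (X i w, Sg i w))].
Proof.
have -> : [set w | covering theta (fun i => (X i w, Sg i w))] = \bigcap_k
    [set w | forall s, exists i, [set w | Sg i w = s /\ Cap (sphere_seq R n k) theta (X i w)] w].
  apply/seteqP; split=> w /=; first by move=> /(coveringP n0) cov k _; exact: cov.
  by move=> cov; apply/(coveringP n0) => k; exact: cov.
apply: bigcapT_measurable => k; apply: measurable_forall => s; apply: measurable_exists => i.
exact: measurableI (mSg i s) (measurable_sample_preimage i (measurable_Cap _ theta)).
Qed.

(* Union bound over the [K * M] events "no sample of label [s] near [f j]". *)
Lemma prob_covering_ge theta K (f : 'I_K -> n.-tuple R) :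
  0 <= theta <= pi / 2 -> (forall j, sphere (f j)) ->
  (forall x, sphere x -> exists j, cos (theta / 2) <= `|dotp (f j) x|) ->
  ((1 - (K * M)%:R * (1 - delta mu (theta / 2) / M%:R) ^+ N)%:E <=
     P [set w | covering theta (fun i => (X i w, Sg i w))])%E.
Proof.
move=> th f1 f_net.
pose miss (p : 'I_K * 'I_M) := missed (Cap (f p.1) (theta / 2)) p.2.
have mmiss p : measurable (miss p) by apply: measurable_missed => //; exact: measurable_Cap.
have hit : [set w | forall p, ~ miss p w] `<=` [set w | covering theta (fun i => (X i w, Sg i w))].
  move=> w nomiss; apply: (covering_of_net th f1 f_net) => j s.
  by have /existsNP[i /contrapT[Ci Si]] := nomiss (j, s); exists i.
have mnomiss : measurable [set w | forall p, ~ miss p w].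
  by apply: measurable_forall => p; exact: measurableC.
have mcov := measurable_covering theta.
apply: le_trans (le_measure P (mem_set mnomiss) (mem_set mcov) hit).
apply: le_trans (prob_forall_not_ge P mmiss).
rewrite (eq_bigr (fun=> (1 - delta mu (theta / 2) / M%:R) ^+ N)) => [|p _]; last first.
  rewrite prob_missed /=; last exact: measurable_Cap.
  congr ((1 - _ / _) ^+ _); exact: (f_equal fine (Cap_measure _ n0 mu_unif (f1 p.1))).
by rewrite sumr_const card_prod !card_ord mulr_natl.
Qed.

End Sampling.

Unset Implicit Arguments.

Theorem lemma2 (R : realType) (n M N : nat)
  (mu : probability (n.-tuple R) R)
  (dO : measure_display) (Omega : measurableType dO) (P : probability Omega R)
  (X : 'I_N -> Omega -> n.-tuple R) (Sg : 'I_N -> Omega -> 'I_M)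
  (eps theta : R) :
  (2 <= n)%N -> (0 < M)%N -> (0 < N)%N ->
  uniform_on_sphere mu ->
  (* measurability of the samples *)
  (forall i, measurable_fun setT (X i)) ->
  (forall i k, measurable (Sg i @^-1` [set k])) ->
  (* (X_i, Sg_i)_{i<N} are i.i.d. with law mu (x) uniform on 'I_M:
     the joint law is the product measure, checked on rectangles *)
  (forall (A : 'I_N -> set (n.-tuple R)) (B : 'I_N -> {set 'I_M}),
      (forall i, measurable (A i)) ->
      P [set w | forall i, A i (X i w) /\ Sg i w \in B i] =
      (\prod_(i < N) (fine (mu (A i)) * (#|B i|%:R / M%:R)))%:E) ->
  0 < eps < 1 ->
  (* theta = delta^{-1}(eps) *)
  0 <= theta <= pi / 2 -> delta mu theta = eps ->
  ((1 - Bbound mu M N theta)%:E <=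
     P [set w | covering theta (fun i => (X i w, Sg i w))])%E.
Proof.
move=> n2 M0 _ mu_unif mX mSg iid /andP[eps0 _] th d_th.
have n0 : (0 < n)%N := ltnW n2.
have [th0 th1] := andP th; have pi0 := pi_gt0 R.
have d4 : 0 < delta mu (theta / 4).
  have [th_eq0|th_neq0] := eqVneq theta 0; first by move: d_th; rewrite th_eq0 mul0r => ->.
  by apply: delta_gt0 => //; [rewrite divr_gt0 // lt_def th_neq0 | lra].
have al0 : 0 <= theta / 4 by lra.
have al2 : theta / 4 + theta / 4 <= pi / 2 by lra.
have [K [f [fsep f_net]]] := exists_maximal_separated n0 mu_unif al0 al2 d4.
have K_le := separated_card_le n0 mu_unif al0 al2 fsep.
have f_net2 x : sphere x -> exists j, cos (theta / 2) <= `|dotp (f j) x|.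
  by move=> /f_net; have -> : theta / 4 + theta / 4 = theta / 2 by field.
apply: le_trans (prob_covering_ge n0 mu_unif mX mSg iid th fsep.1 f_net2).
rewrite lee_fin lerD2l lerN2 /Bbound; set b := _ ^+ N.
have b0 : 0 <= b.
  rewrite exprn_ge0 // subr_ge0 ler_pdivrMr ?ltr0n // mul1r.
  by rewrite (le_trans (delta_le1 _ _)) // ler1n.
rewrite natrM ler_pdivlMr //; have := mulr_ge0 (ler0n R M) b0; nra.
Qed.
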